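(* Let $m\ge3$ be an odd integer and $q$ an odd prime, and set $n'=\left\lceil\frac{q}{q-1}\left(q^{m-1}-q^{m-2}-q^{\frac{m-3}{2}}\right)\right\rceil-q^{m-1}+q^{m-2}-q^{\frac{m-3}{2}}$. Let $\mathbf{C}$ be a $q$-ary linear $[q^{m-1},m]$ code whose set of nonzero weights is $\{q^{m-1}-q^{m-2}-q^{\frac{m-3}{2}},\,q^{m-1}-q^{m-2},\,q^{m-1}-q^{m-2}+q^{\frac{m-3}{2}}\}$. Then the code $\mathbf{C}'$ obtained from $\mathbf{C}$ by the extension construction is a minimal $[q^{m-1}+n',\ m,\ q^{m-1}-q^{m-2}-q^{\frac{m-3}{2}}]_q$ code with maximum weight $q^{m-1}-q^{m-2}+q^{\frac{m-3}{2}}+n'$, and it violates the Ashikhmin–Barg condition.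
   Context: Extension construction for a $q$-ary linear $[N,K]$ code $\mathbf{D}$ with $K\ge2$, minimum nonzero weight $w_{min}$, maximum weight $w_{max}$ and $n'=\lceil\frac{qw_{min}}{q-1}\rceil-w_{max}\ge1$: choose a basis $\mathbf{r}_1,\dots,\mathbf{r}_K$ with $wt(\mathbf{r}_1)=w_{max}$, $wt(\mathbf{r}_2)=w_{min}$, and $\mathbf{a}\in(\mathbf{F}_q^* )^{n'}$; the extended code is generated by $(\mathbf{a},\mathbf{r}_1),(\mathbf{0},\mathbf{r}_2),\dots,(\mathbf{0},\mathbf{r}_K)$ in $\mathbf{F}_q^{n'+N}$. A code is minimal if any two nonzero codewords $\mathbf{c},\mathbf{c}'$ with $supp(\mathbf{c}')\subseteq supp(\mathbf{c})$ satisfy $\mathbf{c}'=\lambda\mathbf{c}$ with $\lambda\in\mathbf{F}_q^*$. Ashikhmin–Barg condition: $w_{min}/w_{max}>(q-1)/q$. *)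

From HB Require Import structures.
From mathcomp Require Import all_boot all_order all_algebra all_field.
Set Implicit Arguments. Unset Strict Implicit. Unset Printing Implicit Defensive.
Import Order.TTheory GRing.Theory Num.Theory.
Local Open Scope ring_scope.

Definition supp (F : fieldType) (n : nat) (c : 'rV[F]_n) : {set 'I_n} :=
  [set i | c 0 i != 0].

Definition wt (F : fieldType) (n : nat) (c : 'rV[F]_n) : nat := #|supp c|.

Definition minimal_code (F : fieldType) (n : nat) (C : {vspace 'rV[F]_n}) : Prop :=
  forall c c' : 'rV[F]_n, c \in C -> c' \in C -> c != 0 -> c' != 0 ->
    supp c' \subset supp c -> exists2 l : F, l != 0 & c' = l *: c.

Definition ext_gens (F : fieldType) (n' N : nat) (a : 'rV[F]_n')
    (r : seq 'rV[F]_N) : seq 'rV[F]_(n' + N) :=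
  [seq (if i == 0%N then row_mx a r`_i else row_mx 0 r`_i) | i <- iota 0 (size r)].

Definition ext_code (F : fieldType) (n' N : nat) (a : 'rV[F]_n')
    (r : seq 'rV[F]_N) : {vspace 'rV[F]_(n' + N)} :=
  <<ext_gens a r>>%VS.

Definition ashikhmin_barg (q wmin wmax : nat) : Prop :=
  ((q - 1)%:R / q%:R < wmin%:R / wmax%:R :> rat).

From HB Require Import structures.
From mathcomp Require Import all_boot all_order all_algebra all_field.
From mathcomp Require Import zify.
Set Implicit Arguments. Unset Strict Implicit. Unset Printing Implicit Defensive.
Import Order.TTheory GRing.Theory Num.Theory.
Local Open Scope ring_scope.

(* The three-weight code C satisfies the Ashikhmin-Barg inequality
   (q - 1) wmax(C) < q wmin(C), so the classical counting argument makes it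
   minimal: if supp c' is contained in supp c and c is not a multiple of c',
   summing the weights of the q - 1 codewords c - mu c' (mu != 0) exceeds what
   wmax allows.  The extended code is the image of C under the injective map
   x |-> (c a, x), c the coefficient of r_1 in x; its last coordinates recover x,
   so minimality transfers, and it adds exactly n' to the weight of the
   codewords with c != 0, giving weights between wmin and wmax(C) + n'.  The
   latter equals the ceiling of q wmin / (q - 1) by the choice of n', which is
   precisely the failure of the Ashikhmin-Barg inequality for the extension. *)

Section Weight.
Variable F : fieldType.

Lemma wt_sum n (c : 'rV[F]_n) : wt c = (\sum_i (c 0%R i != 0%R : nat))%N.
Proof. by rewrite /wt /supp -sum1_card big_mkcond; apply: eq_bigr => i _; rewrite inE. Qed.

Lemma wt_eq0 n (c : 'rV[F]_n) : (wt c == 0%N) = (c == 0).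
Proof.
rewrite wt_sum sum_nat_eq0; apply/forallP/eqP => [c0|-> i]; last by rewrite mxE eqxx.
by apply/rowP => i; move: (c0 i); rewrite mxE eqb0 negbK => /eqP.
Qed.

Lemma wt0 n : wt (0 : 'rV[F]_n) = 0%N.
Proof. by apply/eqP; rewrite wt_eq0. Qed.

Lemma wt_row_mx n1 n2 (u : 'rV[F]_n1) (v : 'rV[F]_n2) :
  wt (row_mx u v) = (wt u + wt v)%N.
Proof.
rewrite !wt_sum big_split_ord.
by congr (_ + _)%N; apply: eq_bigr => i _; rewrite (row_mxEl, row_mxEr).
Qed.

Lemma wt_scale_full n (a : 'rV[F]_n) (k : F) :
  (forall i, a 0 i != 0) -> wt (k *: a) = if k == 0 then 0%N else n.
Proof.
move=> a_full; case: eqP => [->|/eqP k_nz]; first by rewrite scale0r wt0.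
rewrite wt_sum; under eq_bigr do rewrite mxE mulf_eq0 negb_or k_nz a_full.
by rewrite sum_nat_const card_ord muln1.
Qed.

End Weight.

Section MinimalByWeights.
Variable F : finFieldType.

(* A coordinate i in supp x contributes |F| - 1 to the sum if y_i != 0 (only
   mu = x_i / y_i kills it) and |F| if y_i = 0. *)
Lemma sum_wt_subr_scale n (x y : 'rV[F]_n) :
  supp y \subset supp x ->
  (\sum_(mu : F) wt (x - mu *: y) + wt y = #|F| * wt x)%N.
Proof.
move=> /subsetP yx; under eq_bigr do rewrite wt_sum.
rewrite !wt_sum exchange_big -big_split big_distrr /=; apply: eq_bigr => i _.
under eq_bigr do rewrite !mxE.
have [y0|y_nz] := eqVneq (y 0 i) 0.
  by under eq_bigr do rewrite y0 mulr0 subr0; rewrite sum_nat_const addn0.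
have x_nz : x 0 i != 0 by have := yx i; rewrite !inE => ->.
set k := x 0 i / y 0 i.
rewrite x_nz muln1 -sum1_card (bigD1 k) // [RHS](bigD1 k) //= divfK // subrr eqxx.
rewrite add0n addnC; congr (_ + _)%N.
apply: eq_bigr => mu mu_ne.
by rewrite subr_eq0 -(divfK y_nz (x 0 i)) -/k (inj_eq (mulIf y_nz)) eq_sym mu_ne.
Qed.

Lemma minimal_code_weight_ratio n (C : {vspace 'rV[F]_n}) (lo hi : nat) :
  (forall c, c \in C -> c != 0 -> (lo <= wt c <= hi)%N) ->
  (#|F|.-1 * hi < #|F| * lo)%N -> minimal_code C.
Proof.
move=> wC ratio c c' cC c'C c_nz c'_nz sub.
suff [mu mu_nz ->] : exists2 mu : F, mu != 0 & c = mu *: c'.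
  by exists mu^-1; rewrite ?invr_eq0 // scalerA mulVf // scale1r.
have [/existsP[mu /andP[mu_nz /eqP]]|not_mult] :=
  boolP [exists mu : F, (mu != 0) && (c == mu *: c')]; first by exists mu.
have sum_lo : (#|F|.-1 * lo <= \sum_(mu : F | mu != 0%R) wt (c - mu *: c'))%N.
  rewrite -(cardC1 0) -sum_nat_const; apply: leq_sum => mu mu_nz.
  have diff_nz : c - mu *: c' != 0.
    rewrite subr_eq0; apply: contraNneq not_mult => cE.
    by apply/existsP; exists mu; rewrite cE eqxx andbT.
  by case/andP: (wC _ (memvB cC (memvZ mu c'C)) diff_nz).
exfalso; have := sum_wt_subr_scale sub; rewrite (bigD1 0) //= scale0r subr0.
have /andP[lo_c' _] := wC c' c'C c'_nz; have /andP[_ c_hi] := wC c cC c_nz.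
have F_gt0 : (0 < #|F|)%N by apply/card_gt0P; exists 0.
have := leq_mul (leqnn #|F|.-1) c_hi.
move: ratio sum_lo; rewrite -(prednK F_gt0) /=; set s := (\sum_(_ | _) _)%N; nia.
Qed.

End MinimalByWeights.

Section PrependCoordinates.
Variables (F : fieldType) (n' N : nat) (f : 'Hom('rV[F]_N, 'rV[F]_(n' + N))).
Hypothesis f_rsubmx : forall x, rsubmx (f x) = x.

Lemma dim_limg_rsubmx (C : {vspace 'rV[F]_N}) : \dim (f @: C) = \dim C.
Proof.
apply: limg_dim_eq; have /lker0P/eqP -> : injective f.
  by move=> x y /(congr1 rsubmx); rewrite !f_rsubmx.
exact: capv0.
Qed.

Lemma minimal_code_limg_rsubmx (C : {vspace 'rV[F]_N}) :
  minimal_code C -> minimal_code (f @: C).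
Proof.
move=> C_min _ _ /memv_imgP[x xC ->] /memv_imgP[y yC ->] fx_nz fy_nz sub.
have nz_of_f z : f z != 0 -> z != 0 by apply: contraNneq => ->; rewrite linear0.
have [|l l_nz ->] := C_min x y xC yC (nz_of_f x fx_nz) (nz_of_f y fy_nz).
  apply/subsetP => i; rewrite !inE -[y](f_rsubmx) -[x](f_rsubmx) !mxE => fy_i.
  by have := subsetP sub (rshift n' i); rewrite !inE; apply.
by exists l; rewrite ?linearZ.
Qed.

End PrependCoordinates.

Section Extension.
Variables (F : fieldType) (n' N m : nat) (a : 'rV[F]_n') (r : m.-tuple 'rV[F]_N).
Variable i0 : 'I_m.

Definition ext_map (x : 'rV[F]_N) : 'rV[F]_(n' + N) := row_mx (coord r i0 x *: a) x.

Lemma ext_map_is_linear : linear ext_map.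
Proof.
by move=> k u v; rewrite /ext_map linearP scalerDl -scalerA scale_row_mx add_row_mx.
Qed.

HB.instance Definition _ :=
  GRing.isLinear.Build F 'rV[F]_N 'rV[F]_(n' + N) _ ext_map ext_map_is_linear.

Lemma ext_lfunE x : linfun ext_map x = row_mx (coord r i0 x *: a) x.
Proof. by rewrite lfunE. Qed.

Hypotheses (r_free : free r) (i0_0 : i0 = 0%N :> nat).

Lemma ext_codeE : ext_code a r = (linfun ext_map @: <<r>>)%VS.
Proof.
rewrite limg_span; congr span; rewrite /ext_gens -[in RHS](mkseq_nth 0 r) /mkseq.
rewrite -map_comp size_tuple; apply/esym/eq_in_map => i.
rewrite mem_iota add0n => /andP[_ lt_i_m].
have := coord_free (Ordinal lt_i_m) i0 r_free; rewrite -val_eqE /= i0_0 ext_lfunE => ->.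
by case: i lt_i_m => [|i] lt_i_m; rewrite ?scale1r ?scale0r.
Qed.

Lemma ext_map_rsubmx x : rsubmx (linfun ext_map x) = x.
Proof. by rewrite ext_lfunE row_mxKr. Qed.

Lemma dim_ext_code : \dim (ext_code a r) = m.
Proof.
by rewrite ext_codeE dim_limg_rsubmx ?(eqnP r_free) ?size_tuple //; exact: ext_map_rsubmx.
Qed.

Lemma minimal_ext_code : minimal_code <<r>> -> minimal_code (ext_code a r).
Proof. by rewrite ext_codeE; apply: minimal_code_limg_rsubmx; exact: ext_map_rsubmx. Qed.

Hypothesis a_full : forall i, a 0 i != 0.

Lemma wt_ext_lfun x :
  wt (linfun ext_map x) = ((if coord r i0 x == 0%R then 0 else n') + wt x)%N.
Proof. by rewrite ext_lfunE wt_row_mx wt_scale_full. Qed.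

Variables (lo hi : nat) (i1 : 'I_m).
Hypotheses (wt_span : forall c, c \in <<r>>%VS -> c != 0 -> (lo <= wt c <= hi)%N)
  (i1_i0 : i1 != i0) (wt_r0 : wt r`_i0 = hi) (wt_r1 : wt r`_i1 = lo).

Lemma ext_code_weight_range :
  [/\ exists2 c, c \in ext_code a r & (c != 0) && (wt c == lo),
      forall c, c \in ext_code a r -> c != 0 -> (lo <= wt c)%N,
      exists2 c, c \in ext_code a r & (c != 0) && (wt c == hi + n')
    & forall c, c \in ext_code a r -> (wt c <= hi + n')%N].
Proof.
have r_span (i : 'I_m) : r`_i \in <<r>>%VS by rewrite memv_span ?mem_nth ?size_tuple.
have r_nz (i : 'I_m) : r`_i != 0 by rewrite (free_not0 r_free) ?mem_nth ?size_tuple.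
have ext_inj : injective (linfun ext_map).
  by move=> x y /(congr1 rsubmx); rewrite !ext_map_rsubmx.
have ext_nz x : (linfun ext_map x != 0) = (x != 0) by rewrite -(inj_eq ext_inj) linear0.
rewrite ext_codeE; split.
- exists (linfun ext_map r`_i1); first exact: memv_img.
  by rewrite ext_nz r_nz wt_ext_lfun (coord_free _ _ r_free) (negPf i1_i0) eqxx /= add0n wt_r1.
- move=> _ /memv_imgP[x xC ->]; rewrite ext_nz wt_ext_lfun => x_nz.
  by case/andP: (wt_span xC x_nz) => lo_x _; rewrite (leq_trans lo_x) ?leq_addl.
- exists (linfun ext_map r`_i0); first exact: memv_img.
  by rewrite ext_nz r_nz wt_ext_lfun (coord_free _ _ r_free) eqxx /= oner_eq0 wt_r0 addnC.
- move=> _ /memv_imgP[x xC ->]; rewrite wt_ext_lfun addnC leq_add //; last by case: ifP.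
  have [->|x_nz] := eqVneq x 0; first by rewrite wt0.
  by case/andP: (wt_span xC x_nz).
Qed.

End Extension.

Lemma three_weight_ratio (q m : nat) : (3 <= q)%N -> (3 <= m)%N ->
  (q.-1 * (q ^ (m - 1) - q ^ (m - 2) + q ^ ((m - 3) %/ 2))
    < q * (q ^ (m - 1) - q ^ (m - 2) - q ^ ((m - 3) %/ 2)))%N.
Proof.
move=> q_ge3 m_ge3; set s := (q ^ ((m - 3) %/ 2))%N; set t := (q ^ (m - 2))%N.
have -> : (q ^ (m - 1) = q * t)%N by rewrite -expnS; congr expn; lia.
have qs_le_t : (q * s <= t)%N by rewrite -expnS leq_pexp2l; lia.
nia.
Qed.

Lemma not_ashikhmin_barg (q wmin w : nat) : (1 < q)%N ->
  (q * wmin)%:R / (q - 1)%:R <= w%:R :> rat -> ~ ashikhmin_barg q wmin w.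
Proof.
move=> q_gt1 w_ge; apply/negP; rewrite -leNgt.
have q1_gt0 : 0 < (q - 1)%:R :> rat by rewrite ltr0n subn_gt0.
have [->|w_gt0] := posnP w; first by rewrite invr0 mulr0 divr_ge0 ?ler0n.
rewrite ler_pdivrMr ?ltr0n // mulrAC ler_pdivlMr ?ltr0n 1?ltnW //.
rewrite ler_pdivrMr // -!natrM ler_nat in w_ge *.
by rewrite ler_nat mulnC [((q - 1) * w)%N]mulnC.
Qed.

Theorem proposition4p9 (F : finFieldType) (q m n' : nat)
  (hq : prime q) (hqodd : odd q) (hF : #|F| = q)
  (hm : (3 <= m)%N) (hmodd : odd m)
  (hn' : (n'%:Z = Num.ceil ((q * (q ^ (m - 1) - q ^ (m - 2) - q ^ ((m - 3) %/ 2)))%N%:R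
                              / (q - 1)%N%:R : rat)
                  - (q ^ (m - 1) - q ^ (m - 2) + q ^ ((m - 3) %/ 2))%N%:Z))
  (C : {vspace 'rV[F]_(q ^ (m - 1))})
  (hdim : \dim C = m)
  (hweights : forall w : nat,
      (exists c, [/\ c \in C, c != 0 & wt c = w]) <->
      w \in [:: (q ^ (m - 1) - q ^ (m - 2) - q ^ ((m - 3) %/ 2))%N;
                (q ^ (m - 1) - q ^ (m - 2))%N;
                (q ^ (m - 1) - q ^ (m - 2) + q ^ ((m - 3) %/ 2))%N])
  (r : m.-tuple 'rV[F]_(q ^ (m - 1)))
  (hbasis : basis_of C r)
  (hr1 : wt r`_0 = (q ^ (m - 1) - q ^ (m - 2) + q ^ ((m - 3) %/ 2))%N)
  (hr2 : wt r`_1 = (q ^ (m - 1) - q ^ (m - 2) - q ^ ((m - 3) %/ 2))%N)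
  (a : 'rV[F]_n') (ha : forall i, a 0 i != 0) :
  let C' := ext_code a r in
  let wmin := (q ^ (m - 1) - q ^ (m - 2) - q ^ ((m - 3) %/ 2))%N in
  let wmax := (q ^ (m - 1) - q ^ (m - 2) + q ^ ((m - 3) %/ 2) + n')%N in
  [/\ minimal_code C', \dim C' = m,
      [/\ (exists2 c, c \in C' & (c != 0) && (wt c == wmin)),
           (forall c, c \in C' -> c != 0 -> (wmin <= wt c)%N),
           (exists2 c, c \in C' & (c != 0) && (wt c == wmax))
         & (forall c, c \in C' -> (wt c <= wmax)%N)]
    & ~ ashikhmin_barg q wmin wmax].
Proof.
move=> C' wmin wmax; set wmaxC := (q ^ (m - 1) - q ^ (m - 2) + q ^ ((m - 3) %/ 2))%N.
have q_ge3 : (3 <= q)%N.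
  have := prime_gt1 hq; have : q != 2%N by apply: contraTneq hqodd => ->.
  lia.
case/andP: hbasis => /eqP span_r free_r; subst C.
have wt_span c : c \in <<r>>%VS -> c != 0 -> (wmin <= wt c <= wmaxC)%N.
  move=> cC c_nz; have /hweights : exists c', [/\ c' \in <<r>>%VS, c' != 0 & wt c' = wt c].
    by exists c.
  by rewrite !inE => /or3P[]/eqP->; apply/andP; split; lia.
have ratio : (#|F|.-1 * wmaxC < #|F| * wmin)%N by rewrite hF; exact: three_weight_ratio.
have [m_gt0 m_gt1] : (0 < m)%N /\ (1 < m)%N by lia.
have i0_0 : Ordinal m_gt0 = 0%N :> nat by [].
split.
- exact: minimal_ext_code free_r i0_0 (minimal_code_weight_ratio wt_span ratio).
- exact: dim_ext_code free_r i0_0.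
- by apply: (ext_code_weight_range free_r i0_0 ha wt_span (i1 := Ordinal m_gt1)).
- apply: not_ashikhmin_barg; first exact: prime_gt1.
  have ceilE : Num.ceil ((q * wmin)%:R / (q - 1)%:R : rat) = wmax%:Z.
    by rewrite /wmax PoszD hn' addrC subrK.
  by apply: le_trans (ceil_ge _) _; rewrite ceilE.
Qed.
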